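(* If the differentiable function $F:\Omega\subset\mathbb{C}^{2p}\to\mathbb S$ is q-monogenic, then so are the functions $PF$ and $QF$.
   Context: Identify $\mathbb{C}^{2p}\simeq\mathbb{R}^{4p}$ with coordinates $(x_1,y_1,\dots,x_{2p},y_{2p})$, $z_k=x_k+iy_k$, $\partial_{z_k}=\tfrac12(\partial_{x_k}-i\partial_{y_k})$, $\partial_{\bar z_k}=\tfrac12(\partial_{x_k}+i\partial_{y_k})$; $\Omega$ open. $\mathbb{C}_{4p}$ is the complex Clifford algebra generated by $e_1,\dots,e_{4p}$ with $e_\alpha e_\beta+e_\beta e_\alpha=-2\delta_{\alpha\beta}$. Witt basis: $\mathfrak f_k=\tfrac12(-e_{2k-1}+ie_{2k})$, $\mathfrak f_k^\dagger=\tfrac12(e_{2k-1}+ie_{2k})$. $I=\prod_k\mathfrak f_k\mathfrak f_k^\dagger$, $\mathbb S=\mathbb C_{4p}I$. $P=\sum_{j=1}^p\mathfrak f_{2j}\mathfrak f_{2j-1}$, $Q=\sum_{j=1}^p\mathfrak f^\dagger_{2j-1}\mathfrak f^\dagger_{2j}$, acting by left multiplication. A function $G$ with values in $\mathbb S$ is q-monogenic if it is annihilated by $\partial_{\underline z}=\sum_{k}\mathfrak f_k^\dagger\partial_{z_k}$, $\partial_{\underline z}^\dagger=\sum_{k}\mathfrak f_k\partial_{\bar z_k}$, $\partial_{\underline z}^J=\sum_{j=1}^p(\mathfrak f_{2j-1}\partial_{z_{2j}}-\mathfrak f_{2j}\partial_{z_{2j-1}})$ and $\partial_{\underline z}^{\dagger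 J}=\sum_{j=1}^p(\mathfrak f^\dagger_{2j-1}\partial_{\bar z_{2j}}-\mathfrak f^\dagger_{2j}\partial_{\bar z_{2j-1}})$ (equivalently, by $\underline\partial=\sum_\alpha e_\alpha\partial_{X_\alpha}$ and its rotations by the complex structures $\mathbb I,\mathbb J,\mathbb K=\mathbb I\mathbb J$, where $\mathbb{I}(e_{2k-1})=e_{2k}$, $\mathbb{I}(e_{2k})=-e_{2k-1}$, $\mathbb{J}(e_{4j-3})=e_{4j-1}$, $\mathbb{J}(e_{4j-2})=-e_{4j}$, $\mathbb{J}(e_{4j-1})=-e_{4j-3}$, $\mathbb{J}(e_{4j})=e_{4j-2}$). *)

From HB Require Import structures.
From mathcomp Require Import all_boot all_order all_algebra.
From mathcomp Require Import all_classical all_reals all_analysis.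
From mathcomp Require Import complex.
Set Implicit Arguments. Unset Strict Implicit. Unset Printing Implicit Defensive.
Import Order.TTheory GRing.Theory Num.Theory.
Import numFieldNormedType.Exports.
Local Open Scope ring_scope.
Local Open Scope classical_set_scope.

(** An element is the family of its (complex) coordinates on the basis
    e_A, A ⊆ {0,..,m-1}, where e_A = e_{a1} ... e_{ak} for a1 < ... < ak.
    Indices are 0-based: the paper's e_alpha (alpha = 1..m) is our [cl_e (alpha-1)]. *)
Section Clifford.
Variables (R : realType) (m : nat).

Definition Cl := {ffun {set 'I_m} -> complex R}.

(* e_A e_B = (-1)^(#{(a,b) in A x B | b < a} + |A ∩ B|) e_{A Δ B},
   which encodes e_a e_b + e_b e_a = -2 delta_ab. *)
Definition cl_sign (A B : {set 'I_m}) : complex R :=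
  (-1) ^+ (#|finset (fun ab : 'I_m * 'I_m =>
               [&& ab.1 \in A, ab.2 \in B & (val ab.2 < val ab.1)%N])|
           + #|A :&: B|).

Definition cl_mul (x y : Cl) : Cl :=
  [ffun C : {set 'I_m} => \sum_(A : {set 'I_m}) \sum_(B : {set 'I_m})
       if (A :\: B) :|: (B :\: A) == C then cl_sign A B * x A * y B else 0].

Definition cl_one : Cl := [ffun A : {set 'I_m} => if #|A| == 0%N then 1 else 0].

Definition cl_e (a : nat) : Cl :=
  [ffun A : {set 'I_m} => if A == finset (fun i : 'I_m => val i == a) then 1 else 0].

Definition cl_add (x y : Cl) : Cl := [ffun A : {set 'I_m} => x A + y A].
Definition cl_opp (x : Cl) : Cl := [ffun A : {set 'I_m} => - x A].
Definition cl_scale (c : complex R) (x : Cl) : Cl := [ffun A : {set 'I_m} => c * x A].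
Definition cl_zero : Cl := [ffun A : {set 'I_m} => 0].

Definition imag_unit : complex R := Complex 0 1.
Definition half : complex R := (2%:R)^-1.

(* Witt basis, 0-based: the paper's f_k (k = 1..2p) is our [witt (k-1)].
   f_k = 1/2 (-e_{2k-1} + i e_{2k}),  f_k^dagger = 1/2 (e_{2k-1} + i e_{2k}). *)
Definition witt (k : nat) : Cl :=
  cl_scale half (cl_add (cl_opp (cl_e (2 * k))) (cl_scale imag_unit (cl_e (2 * k).+1))).
Definition wittd (k : nat) : Cl :=
  cl_scale half (cl_add (cl_e (2 * k)) (cl_scale imag_unit (cl_e (2 * k).+1))).

Definition cl_sum (I : finType) (f : I -> Cl) : Cl := [ffun A : {set 'I_m} => \sum_(i : I) f i A].

(** * Differential operators on functions 'rV[R]_m -> Cl.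
    Real coordinates X_0, ..., X_{m-1} with z_k = X_{2k} + i X_{2k+1}
    (0-based; i.e. the paper's (x_1,y_1,...,x_{2p},y_{2p})). *)
Definition coord_dir (a : nat) : 'rV[R]_m := \row_(i < m) (if val i == a then 1 else 0).

Definition pderiv (F : 'rV[R]_m -> Cl) (a : nat) (x : 'rV[R]_m) : Cl :=
  [ffun A : {set 'I_m} => Complex ('D_(coord_dir a) (fun y => complex.Re (F y A)) x)
                     ('D_(coord_dir a) (fun y => complex.Im (F y A)) x)].

Definition dz (k : nat) (F : 'rV[R]_m -> Cl) (x : 'rV[R]_m) : Cl :=
  cl_scale half (cl_add (pderiv F (2 * k) x)
                        (cl_opp (cl_scale imag_unit (pderiv F (2 * k).+1 x)))).
Definition dzb (k : nat) (F : 'rV[R]_m -> Cl) (x : 'rV[R]_m) : Cl :=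
  cl_scale half (cl_add (pderiv F (2 * k) x)
                        (cl_scale imag_unit (pderiv F (2 * k).+1 x))).

Definition cl_differentiable (Omega : set 'rV[R]_m) (F : 'rV[R]_m -> Cl) : Prop :=
  forall x, Omega x -> forall A : {set 'I_m},
    differentiable (fun y => complex.Re (F y A)) x /\ differentiable (fun y => complex.Im (F y A)) x.

End Clifford.

Section Quaternionic.
Variables (R : realType) (p : nat).
Local Notation m := (4 * p)%N.
Local Notation Cl := (Cl R m).

Definition clI : Cl :=
  \big[@cl_mul R m / cl_one R m]_(k < 2 * p) cl_mul (witt R m k) (wittd R m k).
Definition in_spinor (x : Cl) : Prop := exists a : Cl, x = cl_mul a clI.

Definition clP : Cl :=
  cl_sum (fun j : 'I_p => cl_mul (witt R m (2 * j).+1) (witt R m (2 * j))).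
Definition clQ : Cl :=
  cl_sum (fun j : 'I_p => cl_mul (wittd R m (2 * j)) (wittd R m (2 * j).+1)).

Definition Dz (F : 'rV[R]_m -> Cl) (x : 'rV[R]_m) : Cl :=
  cl_sum (fun k : 'I_(2 * p) => cl_mul (wittd R m k) (dz k F x)).
Definition Dzdag (F : 'rV[R]_m -> Cl) (x : 'rV[R]_m) : Cl :=
  cl_sum (fun k : 'I_(2 * p) => cl_mul (witt R m k) (dzb k F x)).
Definition DzJ (F : 'rV[R]_m -> Cl) (x : 'rV[R]_m) : Cl :=
  cl_sum (fun j : 'I_p =>
    cl_add (cl_mul (witt R m (2 * j)) (dz (2 * j).+1 F x))
           (cl_opp (cl_mul (witt R m (2 * j).+1) (dz (2 * j) F x)))).
Definition DzdagJ (F : 'rV[R]_m -> Cl) (x : 'rV[R]_m) : Cl :=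
  cl_sum (fun j : 'I_p =>
    cl_add (cl_mul (wittd R m (2 * j)) (dzb (2 * j).+1 F x))
           (cl_opp (cl_mul (wittd R m (2 * j).+1) (dzb (2 * j) F x)))).

Definition q_monogenic (Omega : set 'rV[R]_m) (F : 'rV[R]_m -> Cl) : Prop :=
  [/\ forall x, Omega x -> in_spinor (F x),
      cl_differentiable Omega F &
      forall x, Omega x ->
        [/\ Dz F x = cl_zero R m, Dzdag F x = cl_zero R m,
            DzJ F x = cl_zero R m & DzdagJ F x = cl_zero R m]].

End Quaternionic.

From Pilot Require Import Defs.
From HB Require Import structures.
From mathcomp Require Import all_boot all_order all_algebra.
From mathcomp Require Import all_classical all_reals all_analysis.
From mathcomp Require Import complex.
From mathcomp Require Import ring zify.
Import numFieldNormedType.Exports.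
Set Implicit Arguments. Unset Strict Implicit. Unset Printing Implicit Defensive.
Import Order.TTheory GRing.Theory Num.Theory.
Local Open Scope ring_scope.

(* Left multiplication by a constant c commutes with every partial derivative, so each of the
   four operators applied to cF is its symbol evaluated on the family c (d F).  The Witt vectors
   satisfy the canonical anticommutation relations {f_k, f_l} = {f_k^+, f_l^+} = 0 and
   {f_k, f_l^+} = delta_kl; hence every f_k commutes with P, while (indices from 0)
   f_2j^+ P = P f_2j^+ - f_2j+1 and f_2j+1^+ P = P f_2j+1^+ + f_2j.  Therefore
   D(PF) = P DF + D^J F,  D^+(PF) = P D^+F,  D^J(PF) = P D^J F,  D^+J(PF) = P D^+J F - D^+ F,
   which all vanish when F is q-monogenic; Q is symmetric, with the roles of f and f^+
   exchanged.  Finally S = C_4p I is a left ideal, so PF and QF remain S-valued. *)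

Section SymmetricDifference.
Variable T : finType.
Implicit Types A B C : {set T}.

Definition symdiff A B := (A :\: B) :|: (B :\: A).

Lemma in_symdiff A B x : (x \in symdiff A B) = (x \in A) (+) (x \in B).
Proof. by rewrite !inE; case: (x \in A); case: (x \in B). Qed.

Lemma symdiffC A B : symdiff A B = symdiff B A.
Proof. by apply/setP=> x; rewrite !in_symdiff addbC. Qed.

Lemma symdiffA A B C : symdiff A (symdiff B C) = symdiff (symdiff A B) C.
Proof. by apply/setP=> x; rewrite !in_symdiff addbA. Qed.

Lemma symdiffK A B : symdiff A (symdiff A B) = B.
Proof. by apply/setP=> x; rewrite !in_symdiff addbA addbb. Qed.

Lemma symdiff0 A : symdiff finset.set0 A = A.
Proof. by apply/setP=> x; rewrite !in_symdiff inE. Qed.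

Lemma symdiffv A : symdiff A A = finset.set0.
Proof. by apply/setP=> x; rewrite !in_symdiff addbb inE. Qed.

Lemma symdiff_eq A B C : (symdiff A B == C) = (B == symdiff A C).
Proof. by apply/eqP/eqP=> [<-|->]; rewrite symdiffK. Qed.

Lemma symdiff_inj A : injective (symdiff A).
Proof. by move=> B C eqBC; rewrite -(symdiffK A B) eqBC symdiffK. Qed.

Lemma setI_symdiffl A B C : symdiff A B :&: C = symdiff (A :&: C) (B :&: C).
Proof.
by apply/setP=> x; rewrite !(inE, in_symdiff); case: (x \in A); case: (x \in B); case: (x \in C).
Qed.

Lemma odd_card_symdiff A B : odd #|symdiff A B| = odd #|A| (+) odd #|B|.
Proof.
have disjD : (A :\: B) :&: (B :\: A) = finset.set0.
  by apply/setP=> x; rewrite !inE; case: (x \in A); case: (x \in B); rewrite ?andbF.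
rewrite cardsU disjD cards0 subn0 -(cardsID B A) -(cardsID A B) finset.setIC !oddD.
by case: (odd _); case: (odd _); case: (odd _).
Qed.

End SymmetricDifference.

Section Anticommutator.
Variables (K : pzRingType) (V : algType K).
Implicit Types u v w a b : V.

Definition anticomm u v := u * v + v * u.

Lemma anticommC u v : anticomm u v = anticomm v u.
Proof. exact: addrC. Qed.

Lemma anticommDl u v w : anticomm (u + v) w = anticomm u w + anticomm v w.
Proof. by rewrite /anticomm mulrDl mulrDr addrACA. Qed.

Lemma anticommDr u v w : anticomm w (u + v) = anticomm w u + anticomm w v.
Proof. by rewrite /anticomm mulrDl mulrDr addrACA. Qed.

Lemma anticommZl (c : K) u w : anticomm (c *: u) w = c *: anticomm u w.
Proof. by rewrite /anticomm -scalerAl -scalerAr scalerDr. Qed.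

Lemma anticommZr (c : K) u w : anticomm w (c *: u) = c *: anticomm w u.
Proof. by rewrite /anticomm -scalerAl -scalerAr scalerDr. Qed.

Lemma mulr_anticomm u a b :
  u * (a * b) = a * b * u + anticomm u a * b - a * anticomm u b.
Proof.
rewrite /anticomm mulrDl mulrDr !mulrA opprD addrA addrC.
by rewrite -!addrA addKr subrr addr0.
Qed.

Lemma mulr_anticomm_sum (I : finType) (a b : I -> V) u :
  u * (\sum_i a i * b i) =
  (\sum_i a i * b i) * u + \sum_i (anticomm u (a i) * b i - a i * anticomm u (b i)).
Proof.
rewrite mulr_sumr mulr_suml -big_split; apply: eq_bigr => i _.
by rewrite mulr_anticomm -addrA.
Qed.

End Anticommutator.

Lemma sumr_even_odd (V : nmodType) n (g : nat -> V) :
  \sum_(k < 2 * n) g k = \sum_(j < n) (g (2 * j)%N + g (2 * j).+1).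
Proof.
elim: n => [|n IHn]; first by rewrite muln0 !big_ord0.
rewrite [RHS]big_ord_recr -IHn (_ : 2 * n.+1 = (2 * n).+2)%N; last by lia.
by rewrite !big_ord_recr; exact: esym (addrA _ _ _).
Qed.

Lemma double_eq_odd k l : (2 * k == (2 * l).+1)%N = false.
Proof. by apply/negbTE/eqP; lia. Qed.

Lemma odd_eq_double k l : ((2 * k).+1 == 2 * l)%N = false.
Proof. by apply/negbTE/eqP; lia. Qed.

Section LinearCombinationDerive.
Variables (R : realType) (V : normedModType R) (I : finType).
Variables (a b : I -> R) (g h : I -> V -> R) (x : V).

Local Notation lincomb := (fun y => \sum_i (a i * g i y + b i * h i y)).

Lemma differentiable_lincomb : (forall i, differentiable (g i) x) ->
  (forall i, differentiable (h i) x) -> differentiable lincomb x.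
Proof.
move=> dg dh; rewrite -fct_sumE; elim/big_ind: _ => //.
- by move=> u w du dw; apply: differentiableD.
- by move=> i _; apply: differentiableD; apply: differentiableZ.
Qed.

Lemma derive_lincomb v : (forall i, derivable (g i) x v) ->
  (forall i, derivable (h i) x v) ->
  'D_v lincomb x = \sum_i (a i * 'D_v (g i) x + b i * 'D_v (h i) x).
Proof.
move=> dg dh; apply: derive_val; rewrite -fct_sumE; elim/big_ind2: _ => //.
- exact: is_derive_cst.
- by move=> ? ? ? ? Du Dw; exact: is_deriveD.
- move=> i _; apply: is_deriveD; apply: is_deriveZ; exact: derivableP.
Qed.

End LinearCombinationDerive.

Section CliffordSign.
Variables (R : realType) (m : nat).
Implicit Types A B C : {set 'I_m}.

Definition inversions A B := [set ab : 'I_m * 'I_m |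
  [&& ab.1 \in A, ab.2 \in B & (val ab.2 < val ab.1)%N]].

Definition sign_exponent A B := (#|inversions A B| + #|A :&: B|)%N.

Lemma cl_signE A B : cl_sign R A B = (-1) ^+ odd (sign_exponent A B).
Proof. by rewrite signr_odd. Qed.

Lemma inversions_symdiffl A B C :
  inversions (symdiff A B) C = symdiff (inversions A C) (inversions B C).
Proof.
apply/setP=> ab; rewrite !(inE, in_symdiff).
by case: (ab.1 \in A); case: (ab.1 \in B); case: (_ \in C); case: (_ < _)%N.
Qed.

Lemma inversions_symdiffr A B C :
  inversions C (symdiff A B) = symdiff (inversions C A) (inversions C B).
Proof.
apply/setP=> ab; rewrite !(inE, in_symdiff).
by case: (ab.2 \in A); case: (ab.2 \in B); case: (_ \in C); case: (_ < _)%N.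
Qed.

Lemma odd_sign_exponent_symdiffl A B C : odd (sign_exponent (symdiff A B) C) =
  odd (sign_exponent A C) (+) odd (sign_exponent B C).
Proof.
rewrite /sign_exponent !oddD inversions_symdiffl setI_symdiffl !odd_card_symdiff.
by do 4 case: (odd _).
Qed.

Lemma odd_sign_exponent_symdiffr A B C : odd (sign_exponent C (symdiff A B)) =
  odd (sign_exponent C A) (+) odd (sign_exponent C B).
Proof.
rewrite /sign_exponent !oddD inversions_symdiffr finset.setIC setI_symdiffl.
by rewrite !odd_card_symdiff ![_ :&: C]finset.setIC; do 4 case: (odd _).
Qed.

(* This identity is what makes [cl_mul] associative. *)
Lemma cl_sign_cocycle A B C : cl_sign R A B * cl_sign R (symdiff A B) C =
  cl_sign R A (symdiff B C) * cl_sign R B C.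
Proof.
rewrite !cl_signE -!signr_addb odd_sign_exponent_symdiffl.
by rewrite odd_sign_exponent_symdiffr; do 4 case: (odd _).
Qed.

Lemma cl_sign0s C : cl_sign R finset.set0 C = 1.
Proof.
rewrite cl_signE /sign_exponent finset.set0I cards0 addn0.
suff -> : inversions finset.set0 C = finset.set0 by rewrite cards0.
by apply/setP=> ab; rewrite !inE.
Qed.

Lemma cl_signs0 C : cl_sign R C finset.set0 = 1.
Proof.
rewrite cl_signE /sign_exponent finset.setI0 cards0 addn0.
suff -> : inversions C finset.set0 = finset.set0 by rewrite cards0.
by apply/setP=> ab; rewrite !inE andbF.
Qed.

End CliffordSign.

Section CliffordAlgebra.
Variables (R : realType) (m : nat).
Implicit Types A B C : {set 'I_m}.

Definition cliff := Cl R m.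
HB.instance Definition _ := GRing.Zmodule.on cliff.

Lemma cl_mulE (x y : cliff) C :
  cl_mul x y C = \sum_A cl_sign R A (symdiff A C) * x A * y (symdiff A C).
Proof.
rewrite ffunE; apply: eq_bigr => A _.
rewrite (bigD1 (symdiff A C)) //= -/(symdiff A _) symdiffK eqxx big1 ?addr0 // => B neqB.
by rewrite -/(symdiff A B) symdiff_eq (negbTE neqB).
Qed.

Lemma cl_mulA : associative (@cl_mul R m : cliff -> cliff -> cliff).
Proof.
move=> x y z; apply/ffunP=> C; rewrite !cl_mulE.
under [RHS]eq_bigr => D _ do rewrite cl_mulE mulr_sumr mulr_suml.
rewrite [RHS]exchange_big /=; apply: eq_bigr => A _.
rewrite cl_mulE mulr_sumr [RHS](reindex_inj (@symdiff_inj _ A)) /=.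
apply: eq_bigr => B _; rewrite symdiffK.
have -> : symdiff (symdiff A B) C = symdiff B (symdiff A C).
  by rewrite symdiffA (symdiffC A B) -symdiffA.
set W := symdiff B (symdiff A C).
have := cl_sign_cocycle R A B W; rewrite /W symdiffK => cocycle.
transitivity (cl_sign R A (symdiff A C) * cl_sign R B W * x A * y B * z W); first ring.
by rewrite -cocycle; ring.
Qed.

Lemma cl_oneE A : cl_one R m A = if A == finset.set0 then 1 else 0.
Proof. by rewrite ffunE cards_eq0. Qed.

Lemma cl_mul1r : left_id (cl_one R m : cliff) (@cl_mul R m).
Proof.
move=> y; apply/ffunP=> C; rewrite cl_mulE (bigD1 finset.set0) //= big1 ?addr0.
  by rewrite cl_oneE eqxx cl_sign0s symdiff0 !mul1r.
by move=> A /negbTE nzA; rewrite cl_oneE nzA mulr0 mul0r.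
Qed.

Lemma cl_mulr1 : right_id (cl_one R m : cliff) (@cl_mul R m).
Proof.
move=> y; apply/ffunP=> C; rewrite cl_mulE (bigD1 C) //= big1 ?addr0.
  by rewrite cl_oneE symdiffv eqxx cl_signs0 mul1r mulr1.
move=> A neqAC; rewrite cl_oneE symdiff_eq (symdiffC A finset.set0) symdiff0 eq_sym.
by rewrite (negbTE neqAC) mulr0.
Qed.

Lemma cliff_addE (x y : cliff) A : (x + y) A = x A + y A.
Proof. exact: ffunE. Qed.

Lemma cl_mulDl : left_distributive (@cl_mul R m : cliff -> cliff -> cliff) +%R.
Proof.
move=> x y z; apply/ffunP=> C; rewrite cliff_addE !cl_mulE -big_split /=.
by apply: eq_bigr => A _; rewrite cliff_addE; ring.
Qed.

Lemma cl_mulDr : right_distributive (@cl_mul R m : cliff -> cliff -> cliff) +%R.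
Proof.
move=> x y z; apply/ffunP=> C; rewrite cliff_addE !cl_mulE -big_split /=.
by apply: eq_bigr => A _; rewrite cliff_addE; ring.
Qed.

Lemma cl_one_neq0 : (cl_one R m : cliff) != 0.
Proof.
apply/eqP => /ffunP /(_ finset.set0); rewrite cl_oneE eqxx ffunE => /eqP.
by rewrite oner_eq0.
Qed.

HB.instance Definition _ := GRing.Zmodule_isNzRing.Build cliff
  cl_mulA cl_mul1r cl_mulr1 cl_mulDl cl_mulDr cl_one_neq0.

Fact cl_scaleA a b (v : cliff) : cl_scale a (cl_scale b v) = cl_scale (a * b) v.
Proof. by apply/ffunP=> A; rewrite !ffunE mulrA. Qed.

Fact cl_scale1 : left_id 1 (@cl_scale R m).
Proof. by move=> v; apply/ffunP=> A; rewrite !ffunE mul1r. Qed.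

Fact cl_scaleDr : right_distributive (@cl_scale R m : _ -> cliff -> cliff) +%R.
Proof. by move=> a u v; apply/ffunP=> A; rewrite !ffunE mulrDr. Qed.

Fact cl_scaleDl (v : cliff) : {morph (@cl_scale R m)^~ v : a b / a + b}.
Proof. by move=> a b; apply/ffunP=> A; rewrite !ffunE mulrDl. Qed.

HB.instance Definition _ := GRing.Zmodule_isLmodule.Build (complex R) cliff
  cl_scaleA cl_scale1 cl_scaleDr cl_scaleDl.

Fact cl_scaleAl (a : complex R) (u v : cliff) : a *: (u * v) = (a *: u) * v.
Proof.
apply/ffunP=> C; rewrite ffunE !cl_mulE mulr_sumr.
by apply: eq_bigr => A _; rewrite ffunE; ring.
Qed.

HB.instance Definition _ :=
  GRing.Lmodule_isLalgebra.Build (complex R) cliff cl_scaleAl.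

Fact cl_scaleAr (a : complex R) (u v : cliff) : a *: (u * v) = u * (a *: v).
Proof.
apply/ffunP=> C; rewrite ffunE !cl_mulE mulr_sumr.
by apply: eq_bigr => A _; rewrite ffunE; ring.
Qed.

HB.instance Definition _ :=
  GRing.Lalgebra_isAlgebra.Build (complex R) cliff cl_scaleAr.

Lemma cl_sumE (I : finType) (F : I -> cliff) : cl_sum F = \sum_i F i.
Proof. by apply/ffunP=> A; rewrite ffunE sum_ffunE. Qed.

End CliffordAlgebra.

Section CliffordGenerators.
Variables (R : realType) (m : nat).
Local Notation cliff := (cliff R m).
Implicit Types X Y : {set 'I_m}.

Definition cl_basis X : cliff := [ffun A => if A == X then 1 else 0].

Lemma cl_basis_mul X Y :
  cl_basis X * cl_basis Y = cl_sign R X Y *: cl_basis (symdiff X Y).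
Proof.
apply/ffunP=> C; rewrite cl_mulE (bigD1 X) //= big1 ?addr0.
  rewrite !ffunE eqxx mulr1 symdiff_eq eq_sym.
  by case: eqP => [<-|]; rewrite ?symdiffK ?mulr0.
by move=> A /negbTE neqAX; rewrite ffunE neqAX mulr0 mul0r.
Qed.

Lemma cl_basis0 : cl_basis finset.set0 = 1.
Proof. by apply/ffunP=> A; rewrite ffunE cl_oneE. Qed.

Lemma cl_e_basis a (lt_am : (a < m)%N) : cl_e R m a = cl_basis [set Ordinal lt_am].
Proof.
apply/ffunP=> A; rewrite !ffunE.
suff -> : [set i : 'I_m | val i == a] = [set Ordinal lt_am] by [].
by apply/setP=> i; rewrite !inE -val_eqE.
Qed.

Lemma sign_exponent11 (i j : 'I_m) :
  sign_exponent [set i] [set j] = ((val j < val i)%N + (i == j))%N.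
Proof.
rewrite /sign_exponent.
have -> : inversions [set i] [set j] =
    if (val j < val i)%N then [set (i, j)] else finset.set0.
  apply/setP=> -[x1 x2]; rewrite !inE /=.
  case: (eqVneq x1 i) => [->|neq1] /=.
    case: (eqVneq x2 j) => [->|neq2] /=; first by case: ifP; rewrite ?inE //= !eqxx.
    by case: ifP; rewrite ?inE //= xpair_eqE (negbTE neq2) andbF.
  by case: ifP; rewrite ?inE //= xpair_eqE (negbTE neq1).
have -> : [set i] :&: [set j] = if i == j then [set i] else finset.set0.
  apply/setP=> x; rewrite !inE; case: (eqVneq i j) => [->|neqij]; rewrite ?andbb ?inE //.
  by case: (eqVneq x i) => [->|] //=; rewrite (negbTE neqij).
by case: ifP; case: ifP; rewrite ?cards1 ?cards0.
Qed.

Lemma anticomm_cl_e a b : (a < m)%N -> (b < m)%N ->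
  anticomm (cl_e R m a : cliff) (cl_e R m b) = (if a == b then -2 else 0)%:A.
Proof.
move=> lt_am lt_bm; rewrite (cl_e_basis lt_am) (cl_e_basis lt_bm) /anticomm.
rewrite !cl_basis_mul (symdiffC [set _]) -scalerDl !cl_signE !sign_exponent11.
set i := Ordinal lt_am; set j := Ordinal lt_bm.
have -> : (a == b) = (i == j) by rewrite -val_eqE.
case: (eqVneq i j) => [<-|neqij].
  by rewrite ltnn symdiffv cl_basis0; congr (_ *: _); rewrite expr1; ring.
rewrite !addn0 scale0r; case: (ltngtP (val i) (val j)) => [_|_|/val_inj eqij].
- by rewrite expr0 expr1 addrN scale0r.
- by rewrite expr0 expr1 addNr scale0r.
- by rewrite eqij eqxx in neqij.
Qed.

End CliffordGenerators.

Section WittBasis.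
Variables (R : realType) (p : nat).
Local Notation m := (4 * p)%N.
Local Notation cliff := (cliff R m).
Local Notation e a := (cl_e R m a : cliff).
Local Notation f k := (witt R m k : cliff).
Local Notation fd k := (wittd R m k : cliff).
Local Notation i := (imag_unit R).
Local Notation h := (Defs.half R).

Lemma mul_imag_unit : i * i = -1.
Proof. by rewrite -expr2 sqr_i. Qed.

Lemma anticomm_cl_e_pair k l (a b c d : complex R) :
  (k < 2 * p)%N -> (l < 2 * p)%N ->
  anticomm (a *: e (2 * k) + b *: e (2 * k).+1) (c *: e (2 * l) + d *: e (2 * l).+1) =
  (if k == l then -2 * (a * c + b * d) else 0)%:A.
Proof.
move=> lt_k lt_l.
rewrite !(anticommDl, anticommDr, anticommZl, anticommZr) !anticomm_cl_e; try lia.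
rewrite double_eq_odd odd_eq_double eqSS eqn_pmul2l //.
case: eqP => _; last by rewrite scale0r !scaler0 !addr0.
by rewrite !scalerA -!scalerDl; congr (_ *: _); ring.
Qed.

Lemma wittE k : f k = - h *: e (2 * k) + (h * i) *: e (2 * k).+1.
Proof. by rewrite scaleNr -scalerN -scalerA -scalerDr. Qed.

Lemma wittdE k : fd k = h *: e (2 * k) + (h * i) *: e (2 * k).+1.
Proof. by rewrite -scalerA -scalerDr. Qed.

Lemma anticomm_witt k l : (k < 2 * p)%N -> (l < 2 * p)%N -> anticomm (f k) (f l) = 0.
Proof.
move=> lt_k lt_l; rewrite !wittE anticomm_cl_e_pair //; case: eqP => _; last exact: scale0r.
by rewrite mulrACA mul_imag_unit mulrN1 mulrNN subrr mulr0 scale0r.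
Qed.

Lemma anticomm_wittd k l : (k < 2 * p)%N -> (l < 2 * p)%N -> anticomm (fd k) (fd l) = 0.
Proof.
move=> lt_k lt_l; rewrite !wittdE anticomm_cl_e_pair //; case: eqP => _; last exact: scale0r.
by rewrite mulrACA mul_imag_unit mulrN1 subrr mulr0 scale0r.
Qed.

Lemma anticomm_witt_wittd k l : (k < 2 * p)%N -> (l < 2 * p)%N ->
  anticomm (f k) (fd l) = (if k == l then 1 else 0)%:A.
Proof.
move=> lt_k lt_l; rewrite wittE wittdE anticomm_cl_e_pair //.
case: eqP => _ //; congr (_ *: _).
by rewrite mulrACA mul_imag_unit mulrN1 mulNr /Defs.half; field.
Qed.

End WittBasis.

Section CommutationPQ.
Variables (R : realType) (p : nat).
Local Notation m := (4 * p)%N.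
Local Notation cliff := (cliff R m).
Local Notation f k := (witt R m k : cliff).
Local Notation fd k := (wittd R m k : cliff).
Local Notation P := (clP R p : cliff).
Local Notation Q := (clQ R p : cliff).

Lemma clPE : P = \sum_(j < p) f (2 * j).+1 * f (2 * j).
Proof. exact: cl_sumE. Qed.

Lemma clQE : Q = \sum_(j < p) fd (2 * j) * fd (2 * j).+1.
Proof. exact: cl_sumE. Qed.

Lemma witt_comm_P k : (k < 2 * p)%N -> GRing.comm (f k) P.
Proof.
move=> lt_k; rewrite /GRing.comm clPE mulr_anticomm_sum -[RHS]addr0; congr (_ + _).
apply: big1 => j _; have lt_j := ltn_ord j.
by rewrite !anticomm_witt ?mul0r ?mulr0 ?subrr //; lia.
Qed.

Lemma wittd_comm_Q k : (k < 2 * p)%N -> GRing.comm (fd k) Q.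
Proof.
move=> lt_k; rewrite /GRing.comm clQE mulr_anticomm_sum -[RHS]addr0; congr (_ + _).
apply: big1 => j _; have lt_j := ltn_ord j.
by rewrite !anticomm_wittd ?mul0r ?mulr0 ?subrr //; lia.
Qed.

Lemma wittd_even_P (i : 'I_p) : fd (2 * i) * P = P * fd (2 * i) - f (2 * i).+1.
Proof.
rewrite clPE mulr_anticomm_sum; congr (_ + _).
transitivity (\sum_(j < p) if j == i then - f (2 * j).+1 else 0).
  apply: eq_bigr => j _; have [lt_i lt_j] := (ltn_ord i, ltn_ord j).
  rewrite !(anticommC (fd _)) !anticomm_witt_wittd ?odd_eq_double ?eqn_pmul2l //; try lia.
  by rewrite val_eqE; case: (j == i); rewrite scale0r ?scale1r mul0r ?mulr0 ?mulr1 ?subr0 ?sub0r.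
by rewrite (bigD1 i) //= eqxx big1 ?addr0 // => j /negbTE ->.
Qed.

Lemma wittd_odd_P (i : 'I_p) : fd (2 * i).+1 * P = P * fd (2 * i).+1 + f (2 * i).
Proof.
rewrite clPE mulr_anticomm_sum; congr (_ + _).
transitivity (\sum_(j < p) if j == i then f (2 * j) else 0).
  apply: eq_bigr => j _; have [lt_i lt_j] := (ltn_ord i, ltn_ord j).
  rewrite !(anticommC (fd _)) !anticomm_witt_wittd; try lia.
  rewrite double_eq_odd eqSS eqn_pmul2l //.
  by rewrite val_eqE; case: (j == i); rewrite scale0r ?scale1r mulr0 ?mul1r ?mul0r ?subr0.
by rewrite (bigD1 i) //= eqxx big1 ?addr0 // => j /negbTE ->.
Qed.

Lemma witt_even_Q (i : 'I_p) : f (2 * i) * Q = Q * f (2 * i) + fd (2 * i).+1.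
Proof.
rewrite clQE mulr_anticomm_sum; congr (_ + _).
transitivity (\sum_(j < p) if j == i then fd (2 * j).+1 else 0).
  apply: eq_bigr => j _; have [lt_i lt_j] := (ltn_ord i, ltn_ord j).
  rewrite !anticomm_witt_wittd ?double_eq_odd ?eqn_pmul2l //; try lia.
  by rewrite val_eqE eq_sym; case: (j == i); rewrite scale0r ?scale1r mulr0 ?mul1r ?mul0r ?subr0.
by rewrite (bigD1 i) //= eqxx big1 ?addr0 // => j /negbTE ->.
Qed.

Lemma witt_odd_Q (i : 'I_p) : f (2 * i).+1 * Q = Q * f (2 * i).+1 - fd (2 * i).
Proof.
rewrite clQE mulr_anticomm_sum; congr (_ + _).
transitivity (\sum_(j < p) if j == i then - fd (2 * j) else 0).
  apply: eq_bigr => j _; have [lt_i lt_j] := (ltn_ord i, ltn_ord j).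
  rewrite !anticomm_witt_wittd ?odd_eq_double ?eqSS ?eqn_pmul2l //; try lia.
  by rewrite val_eqE eq_sym; case: (j == i);
    rewrite scale0r ?scale1r mul0r ?mulr0 ?mulr1 ?subr0 ?sub0r.
by rewrite (bigD1 i) //= eqxx big1 ?addr0 // => j /negbTE ->.
Qed.

End CommutationPQ.

Section DiracSymbols.
Variables (R : realType) (p : nat).
Local Notation m := (4 * p)%N.
Local Notation cliff := (cliff R m).
Local Notation f k := (witt R m k : cliff).
Local Notation fd k := (wittd R m k : cliff).
Local Notation P := (clP R p : cliff).
Local Notation Q := (clQ R p : cliff).
Implicit Type X : nat -> cliff.

(* Symbols of the four operators, evaluated on a family X of partial derivatives
   ([Dz F x = dirac_z (fun k => dz k F x)], see [DzE] below). *)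
Definition dirac_z X := \sum_(k < 2 * p) fd k * X k.
Definition dirac_zdag X := \sum_(k < 2 * p) f k * X k.
Definition dirac_zJ X :=
  \sum_(j < p) (f (2 * j) * X (2 * j).+1 - f (2 * j).+1 * X (2 * j)%N).
Definition dirac_zdagJ X :=
  \sum_(j < p) (fd (2 * j) * X (2 * j).+1 - fd (2 * j).+1 * X (2 * j)%N).

Lemma dirac_z_mulP X : dirac_z (fun k => P * X k) = P * dirac_z X + dirac_zJ X.
Proof.
rewrite /dirac_z (sumr_even_odd _ (fun k => fd k * (P * X k))).
rewrite (sumr_even_odd _ (fun k => fd k * X k)) mulr_sumr -big_split.
apply: eq_bigr => j _; rewrite !mulrA wittd_even_P wittd_odd_P mulrBl mulrDl mulrDr !mulrA.
by rewrite addrACA [- _ + _]addrC.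
Qed.

Lemma dirac_zdag_mulP X : dirac_zdag (fun k => P * X k) = P * dirac_zdag X.
Proof.
rewrite mulr_sumr; apply: eq_bigr => k _.
by rewrite !mulrA witt_comm_P.
Qed.

Lemma dirac_zJ_mulP X : dirac_zJ (fun k => P * X k) = P * dirac_zJ X.
Proof.
rewrite mulr_sumr; apply: eq_bigr => j _; have lt_j := ltn_ord j.
by rewrite mulrBr !mulrA !witt_comm_P //; lia.
Qed.

Lemma dirac_zdagJ_mulP X :
  dirac_zdagJ (fun k => P * X k) = P * dirac_zdagJ X - dirac_zdag X.
Proof.
rewrite /dirac_zdag (sumr_even_odd _ (fun k => f k * X k)) mulr_sumr -sumrB.
apply: eq_bigr => j _; rewrite !mulrA wittd_even_P wittd_odd_P mulrBl mulrDl mulrBr !mulrA.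
by rewrite !opprD addrACA [- _ - _]addrC.
Qed.

Lemma dirac_z_mulQ X : dirac_z (fun k => Q * X k) = Q * dirac_z X.
Proof.
rewrite mulr_sumr; apply: eq_bigr => k _.
by rewrite !mulrA wittd_comm_Q.
Qed.

Lemma dirac_zdag_mulQ X :
  dirac_zdag (fun k => Q * X k) = Q * dirac_zdag X - dirac_zdagJ X.
Proof.
rewrite /dirac_zdag (sumr_even_odd _ (fun k => f k * (Q * X k))).
rewrite (sumr_even_odd _ (fun k => f k * X k)) mulr_sumr -sumrB.
apply: eq_bigr => j _; rewrite !mulrA witt_even_Q witt_odd_Q mulrBl mulrDl mulrDr !mulrA.
by rewrite opprD opprK addrACA [- _ + _]addrC.
Qed.

Lemma dirac_zJ_mulQ X : dirac_zJ (fun k => Q * X k) = Q * dirac_zJ X + dirac_z X.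
Proof.
rewrite /dirac_z (sumr_even_odd _ (fun k => fd k * X k)) mulr_sumr -big_split.
apply: eq_bigr => j _; rewrite !mulrA witt_even_Q witt_odd_Q mulrBl mulrDl mulrBr !mulrA.
by rewrite opprD opprK addrACA [_ + fd _ * _]addrC.
Qed.

Lemma dirac_zdagJ_mulQ X : dirac_zdagJ (fun k => Q * X k) = Q * dirac_zdagJ X.
Proof.
rewrite mulr_sumr; apply: eq_bigr => j _; have lt_j := ltn_ord j.
by rewrite mulrBr !mulrA !wittd_comm_Q //; lia.
Qed.

End DiracSymbols.

Section CliffordDerivative.
Variables (R : realType) (m : nat).
Local Notation cliff := (cliff R m).
Local Notation Re := complex.Re.
Local Notation Im := complex.Im.
Implicit Types (F : 'rV[R]_m -> cliff) (x : 'rV[R]_m).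

Definition cl_differentiable_at F x := forall A,
  differentiable (fun y => Re (F y A)) x /\ differentiable (fun y => Im (F y A)) x.

Lemma Re_mul (w z : complex R) : Re (w * z) = Re w * Re z + - Im w * Im z.
Proof. by case: w => ? ?; case: z => ? ? /=; rewrite mulNr. Qed.

Lemma Im_mul (w z : complex R) : Im (w * z) = Im w * Re z + Re w * Im z.
Proof. by case: w => ? ?; case: z => ? ? /=; rewrite addrC. Qed.

Lemma Re_sum (I : finType) (w : I -> complex R) : Re (\sum_i w i) = \sum_i Re (w i).
Proof. by apply: big_morph => // -[? ?] [? ?]. Qed.

Lemma Im_sum (I : finType) (w : I -> complex R) : Im (\sum_i w i) = \sum_i Im (w i).
Proof. by apply: big_morph => // -[? ?] [? ?]. Qed.

Section MulCoefficient.
Variables (c : cliff) (C : {set 'I_m}).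
Let w A := cl_sign R A (symdiff A C) * c A.

Lemma Re_cl_mul (y : cliff) : Re ((c * y) C) =
  \sum_A (Re (w A) * Re (y (symdiff A C)) + - Im (w A) * Im (y (symdiff A C))).
Proof. by rewrite cl_mulE Re_sum; apply: eq_bigr => A _; rewrite Re_mul. Qed.

Lemma Im_cl_mul (y : cliff) : Im ((c * y) C) =
  \sum_A (Im (w A) * Re (y (symdiff A C)) + Re (w A) * Im (y (symdiff A C))).
Proof. by rewrite cl_mulE Im_sum; apply: eq_bigr => A _; rewrite Im_mul. Qed.

End MulCoefficient.

Lemma cl_differentiable_at_mull c F x : cl_differentiable_at F x ->
  cl_differentiable_at (fun y => c * F y) x.
Proof.
move=> dF C /=; rewrite (funext (fun y => Re_cl_mul c C (F y))).
rewrite (funext (fun y => Im_cl_mul c C (F y))).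
by split; apply: differentiable_lincomb => A; case: (dF (symdiff A C)).
Qed.

Lemma pderiv_mull c F a x : cl_differentiable_at F x ->
  pderiv (fun y => c * F y) a x = c * pderiv F a x.
Proof.
move=> dF; apply/ffunP=> C; apply/eqP; rewrite eq_complex Re_cl_mul Im_cl_mul.
under eq_bigr do rewrite ffunE /=.
under [X in _ && (_ == X)]eq_bigr do rewrite ffunE /=.
rewrite ffunE /= (funext (fun y => Re_cl_mul c C (F y))).
rewrite (funext (fun y => Im_cl_mul c C (F y))).
have dRe A : derivable (fun y => Re (F y A)) x (coord_dir R m a).
  exact/diff_derivable/(dF A).1.
have dIm A : derivable (fun y => Im (F y A)) x (coord_dir R m a).
  exact/diff_derivable/(dF A).2.
by rewrite !derive_lincomb ?eqxx // => A; first [exact: dRe | exact: dIm].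
Qed.

Lemma dzE F k x : dz k F x =
  Defs.half R *: (pderiv F (2 * k) x - imag_unit R *: pderiv F (2 * k).+1 x) :> cliff.
Proof. by []. Qed.

Lemma dzbE F k x : dzb k F x =
  Defs.half R *: (pderiv F (2 * k) x + imag_unit R *: pderiv F (2 * k).+1 x) :> cliff.
Proof. by []. Qed.

Lemma dz_mull c F k x : cl_differentiable_at F x ->
  dz k (fun y => c * F y) x = c * dz k F x.
Proof. by move=> dF; rewrite !dzE !pderiv_mull // -scalerAr mulrBr -scalerAr. Qed.

Lemma dzb_mull c F k x : cl_differentiable_at F x ->
  dzb k (fun y => c * F y) x = c * dzb k F x.
Proof. by move=> dF; rewrite !dzbE !pderiv_mull // -scalerAr mulrDr -scalerAr. Qed.

End CliffordDerivative.

Section QMonogenic.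
Variables (R : realType) (p : nat).
Local Notation m := (4 * p)%N.
Local Notation cliff := (cliff R m).
Local Notation P := (clP R p : cliff).
Local Notation Q := (clQ R p : cliff).
Implicit Types (X Y : nat -> cliff) (F : 'rV[R]_m -> cliff) (x : 'rV[R]_m).

Lemma DzE F x : Dz F x = dirac_z (fun k => dz k F x).
Proof. exact: cl_sumE. Qed.

Lemma DzdagE F x : Dzdag F x = dirac_zdag (fun k => dzb k F x).
Proof. exact: cl_sumE. Qed.

Lemma DzJE F x : DzJ F x = dirac_zJ (fun k => dz k F x).
Proof. exact: cl_sumE. Qed.

Lemma DzdagJE F x : DzdagJ F x = dirac_zdagJ (fun k => dzb k F x).
Proof. exact: cl_sumE. Qed.

Definition dirac_null X Y := [/\ dirac_z X = 0, dirac_zdag Y = 0,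
  dirac_zJ X = 0 & dirac_zdagJ Y = 0].

Lemma dirac_null_mulP X Y :
  dirac_null X Y -> dirac_null (fun k => P * X k) (fun k => P * Y k).
Proof.
case=> zX zdagY zJX zdagJY; split.
- by rewrite dirac_z_mulP zX zJX mulr0 addr0.
- by rewrite dirac_zdag_mulP zdagY mulr0.
- by rewrite dirac_zJ_mulP zJX mulr0.
- by rewrite dirac_zdagJ_mulP zdagJY zdagY mulr0 subr0.
Qed.

Lemma dirac_null_mulQ X Y :
  dirac_null X Y -> dirac_null (fun k => Q * X k) (fun k => Q * Y k).
Proof.
case=> zX zdagY zJX zdagJY; split.
- by rewrite dirac_z_mulQ zX mulr0.
- by rewrite dirac_zdag_mulQ zdagY zdagJY mulr0 subr0.
- by rewrite dirac_zJ_mulQ zJX zX mulr0 addr0.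
- by rewrite dirac_zdagJ_mulQ zdagJY mulr0.
Qed.

Lemma q_monogenic_mull (c : cliff) (Omega : set 'rV[R]_m) F :
  (forall X Y, dirac_null X Y -> dirac_null (fun k => c * X k) (fun k => c * Y k)) ->
  q_monogenic Omega F -> q_monogenic Omega (fun x => c * F x).
Proof.
move=> c_null [spinorF dF nullF]; split.
- by move=> x /spinorF [a ->]; exists (c * a); rewrite -cl_mulA.
- by move=> x /dF; exact: cl_differentiable_at_mull.
move=> x Ox; have dFx : cl_differentiable_at F x := dF x Ox.
have dz_cF : (fun k => dz k (fun y => c * F y) x) = fun k => c * dz k F x.
  by apply: funext => k; exact: dz_mull.
have dzb_cF : (fun k => dzb k (fun y => c * F y) x) = fun k => c * dzb k F x.
  by apply: funext => k; exact: dzb_mull.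
rewrite DzE DzdagE DzJE DzdagJE dz_cF dzb_cF; apply: c_null.
by rewrite /dirac_null -DzE -DzdagE -DzJE -DzdagJE; exact: nullF.
Qed.

End QMonogenic.

Theorem lemma2 (R : realType) (p : nat) (Omega : set 'rV[R]_(4 * p))
    (F : 'rV[R]_(4 * p) -> Cl R (4 * p)) :
  open Omega ->
  cl_differentiable Omega F ->
  q_monogenic Omega F ->
  q_monogenic Omega (fun x => cl_mul (clP R p) (F x)) /\
  q_monogenic Omega (fun x => cl_mul (clQ R p) (F x)).
Proof.
move=> _ _ qF.
by split; apply: q_monogenic_mull qF; [exact: dirac_null_mulP | exact: dirac_null_mulQ].
Qed.
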